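(* Let $\mu$ be a valuation on $\mathrm{Spec}(R)$ and $f\in R$, $f\ge0$. For every natural number $N\ge1$ and all rationals $r<s$ there exist rationals $r',s'$ with $r<r'<s'<s$ such that $\Delta[r',s']<\frac1N$.
   Context: $R$ is a Riesz space over $\mathbb{Q}$ with strong unit $1$; rationals identified with multiples of $1$. $\mathrm{Spec}(R)$ is the distributive lattice generated by $D(a)$, $a\in R$, subject to $D(1)=1$; $D(a)\wedge D(-a)=0$; $D(a+b)\le D(a)\vee D(b)$; $D(a)=0$ if $a\le0$; $D(a\vee b)=D(a)\vee D(b)$. A valuation is a map $\mu$ from $\mathrm{Spec}(R)$ to nonnegative lower reals (inhabited, downward closed, rounded sets of rationals) with $\mu(0)=0$, $\mu(1)=1$, $\mu(x)+\mu(y)=\mu(x\vee y)+\mu(x\wedge y)$, monotone, and $\mu(D(a))\le\bigvee_{\varepsilon>0}\mu(D(a-\varepsilon))$. $\Delta(r,s):=\mu(D(f-r)\wedge D(s-f))$, and $\Delta[r,s]$ is the upper real $1-\mu(D(r-f))-\mu(D(f-s))$; ''$\Delta[r',s']<q$'' means $q$ belongs to this upper real, i.e. there are rationals $a<\mu(D(r'-f))$, $b<\mu(D(f-s'))$ with $1-a-b<q$. *)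

From HB Require Import structures.
From mathcomp Require Import all_boot all_order all_algebra.
Set Implicit Arguments. Unset Strict Implicit. Unset Printing Implicit Defensive.
Import Order.TTheory GRing.Theory Num.Theory.
Local Open Scope ring_scope.

Record riesz_space (V : lmodType rat) := RieszSpace {
  rle : V -> V -> Prop;
  rjoin : V -> V -> V;
  rmeet : V -> V -> V;
  runit : V;
  rle_refl : forall a, rle a a;
  rle_trans : forall a b c, rle a b -> rle b c -> rle a c;
  rle_anti : forall a b, rle a b -> rle b a -> a = b;
  rjoin_ubl : forall a b, rle a (rjoin a b);
  rjoin_ubr : forall a b, rle b (rjoin a b);
  rjoin_lub : forall a b c, rle a c -> rle b c -> rle (rjoin a b) c;
  rmeet_lbl : forall a b, rle (rmeet a b) a;
  rmeet_lbr : forall a b, rle (rmeet a b) b;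
  rmeet_glb : forall a b c, rle c a -> rle c b -> rle c (rmeet a b);
  rle_add : forall a b c, rle a b -> rle (a + c) (b + c);
  rle_scale : forall (q : rat) a b, 0 <= q -> rle a b -> rle (q *: a) (q *: b);
  runit_pos : rle 0 runit;
  runit_strong : forall a, exists n : nat, rle (rjoin a (- a)) (n%:R *: runit)
}.

(** Rationals identified with multiples of the unit. *)
Definition rq (V : lmodType rat) (R : riesz_space V) (q : rat) : V := q *: runit R.

(** * Spec(R): the distributive lattice generated by the D(a), presented as
    lattice terms modulo the least lattice preorder containing the distributive
    lattice laws and the defining relations. *)
Inductive spec_term (V : Type) : Type :=
  | SD : V -> spec_term V
  | Sbot : spec_term V
  | Stop : spec_term V
  | Sjoin : spec_term V -> spec_term V -> spec_term V
  | Smeet : spec_term V -> spec_term V -> spec_term V.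
Arguments Sbot {V}. Arguments Stop {V}.

Inductive spec_le (V : lmodType rat) (R : riesz_space V) :
    spec_term V -> spec_term V -> Prop :=
  | sle_refl x : spec_le R x x
  | sle_trans x y z : spec_le R x y -> spec_le R y z -> spec_le R x z
  | sle_bot x : spec_le R Sbot x
  | sle_top x : spec_le R x Stop
  | sle_joinl x y : spec_le R x (Sjoin x y)
  | sle_joinr x y : spec_le R y (Sjoin x y)
  | sle_join x y z : spec_le R x z -> spec_le R y z -> spec_le R (Sjoin x y) z
  | sle_meetl x y : spec_le R (Smeet x y) x
  | sle_meetr x y : spec_le R (Smeet x y) y
  | sle_meet x y z : spec_le R z x -> spec_le R z y -> spec_le R z (Smeet x y)
  | sle_distr x y z :
      spec_le R (Smeet x (Sjoin y z)) (Sjoin (Smeet x y) (Smeet x z))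
  | sle_D1 : spec_le R Stop (SD (runit R))
  | sle_Dopp a : spec_le R (Smeet (SD a) (SD (- a))) Sbot
  | sle_Dadd a b : spec_le R (SD (a + b)) (Sjoin (SD a) (SD b))
  | sle_Dnonpos a : rle R a 0 -> spec_le R (SD a) Sbot
  | sle_Djoin1 a b : spec_le R (SD (rjoin R a b)) (Sjoin (SD a) (SD b))
  | sle_Djoin2 a b : spec_le R (Sjoin (SD a) (SD b)) (SD (rjoin R a b)).

Definition lower_real (x : rat -> Prop) : Prop :=
  (exists q, x q) /\
  (forall p q, p <= q -> x q -> x p) /\
  (forall q, x q -> exists p, q < p /\ x p).

Definition lr_nonneg (x : rat -> Prop) : Prop := forall q : rat, q < 0 -> x q.

Definition lr_const (c : rat) : rat -> Prop := fun q => q < c.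

Definition lr_add (x y : rat -> Prop) : rat -> Prop :=
  fun q => exists a b, x a /\ y b /\ q < a + b.

Definition lr_eq (x y : rat -> Prop) : Prop := forall q, x q <-> y q.
Definition lr_le (x y : rat -> Prop) : Prop := forall q, x q -> y q.

Record valuation (V : lmodType rat) (R : riesz_space V)
    (mu : spec_term V -> rat -> Prop) : Prop := Valuation {
  val_lower : forall x, lower_real (mu x);
  val_nonneg : forall x, lr_nonneg (mu x);
  val_mono : forall x y, spec_le R x y -> lr_le (mu x) (mu y);
  val_bot : lr_eq (mu Sbot) (lr_const 0);
  val_top : lr_eq (mu Stop) (lr_const 1);
  val_modular : forall x y,
      lr_eq (lr_add (mu x) (mu y)) (lr_add (mu (Sjoin x y)) (mu (Smeet x y)));
  val_cont : forall a q, mu (SD a) q ->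
      exists eps : rat, 0 < eps /\ mu (SD (a - rq R eps)) q
}.

(** "Delta[r,s] < q" : q belongs to the upper real 1 - mu(D(r-f)) - mu(D(f-s)). *)
Definition Delta_lt (V : lmodType rat) (R : riesz_space V)
    (mu : spec_term V -> rat -> Prop) (f : V) (r s q : rat) : Prop :=
  exists a b : rat, mu (SD (rq R r - f)) a /\ mu (SD (f - rq R s)) b /\
                    1 - a - b < q.

From HB Require Import structures.
From mathcomp Require Import all_boot all_order all_algebra.
From mathcomp Require Import ring lra.
Set Implicit Arguments. Unset Strict Implicit. Unset Printing Implicit Defensive.
Import Order.TTheory GRing.Theory Num.Theory.
Local Open Scope ring_scope.

(** Cut [r, s] by an equally spaced grid t_0 < t_1 < ... < t_(2N+2) = s and
    look at the N+1 bands [t_(2i), t_(2i+1)].  Writing A_i = mu(D(t_(2i) - f))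
    and B_i = mu(D(f - t_(2i+1))), the band i has Delta = 1 - A_i - B_i.  For
    u < v the opens D(v - f) and D(f - u) cover Spec(R), so modularity gives
    A_(i+1) + B_i >= 1; telescoping, the N+1 values of Delta sum to at most 1
    and one of them is at most 1/(N+1) < 1/N. *)

(** Telescoping pigeonhole for lower reals. *)
Lemma lower_real_pigeonhole (A B : nat -> rat -> Prop) (N : nat) (c : rat) :
  1 < N.+1%:R * c ->
  (forall q, q < 0 -> A 0%N q) -> (forall q, q < 0 -> B N q) ->
  (forall i, (i < N)%N -> lr_le (lr_const 1) (lr_add (A i.+1) (B i))) ->
  exists i, (i <= N)%N /\ exists a b, A i a /\ B i b /\ 1 - a - b < c.
Proof.
move=> hc hA0 hBN hgap.
pose good i := exists a b, A i a /\ B i b /\ 1 - a - b < c.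
(* e is the slack lost per step; N+2 such losses stay below (N+1)c - 1. *)
set e : rat := (N.+1%:R * c - 1) / N.+3%:R.
have e_pos : 0 < e by rewrite divr_gt0 ?subr_gt0 ?ltr0n.
have e_def : e * N.+3%:R = N.+1%:R * c - 1 by rewrite divfK ?pnatr_eq0.
(* Unless an earlier index works, A_k reaches k(c - e) - e. *)
have climb k : (k <= N)%N ->
    (exists i, (i <= N)%N /\ good i) \/ exists a, A k a /\ k%:R * (c - e) - e <= a.
  elim: k => [|k IH] hk.
    by right; exists (- e); rewrite mul0r sub0r; split; [apply: hA0; lra|].
  have [found|[a [ha ha_ge]]] := IH (ltnW hk); first by left.
  have near1 : lr_const 1 (1 - e) by rewrite /lr_const; lra.
  have [a' [b [ha' [hb hab']]]] := hgap k hk (1 - e) near1.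
  case: (ltP (1 - a - b) c) => [lt_c|ge_c].
    by left; exists k; split; [exact: ltnW|exists a, b].
  right; exists a'; split => //.
  rewrite -natr1 mulrDl mul1r; lra.
have [[i [hi gi]]|[a [ha ha_ge]]] := climb N (leqnn N); first by exists i.
exists N; split => //; exists a, (- e); split => //; split; first by apply: hBN; lra.
rewrite -!natr1 in e_def hc; lra.
Qed.

Section SpecCover.
Variables (V : lmodType rat) (R : riesz_space V).

Lemma spec_D_rat_nonpos (q : rat) : q <= 0 -> spec_le R (SD (rq R q)) Sbot.
Proof.
move=> hq; apply: sle_Dnonpos.
have nq : 0 <= - q by lra.
have := rle_add (rq R q) (rle_scale nq (runit_pos R)).
by rewrite scaler0 add0r /rq -scalerDl addNr scale0r.
Qed.

Lemma spec_D_natmul (a : V) (n : nat) : spec_le R (SD (a *+ n.+1)) (SD a).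
Proof.
elim: n => [|n IH]; first exact: sle_refl.
rewrite mulrS; apply: sle_trans (sle_Dadd R _ _) _.
exact: sle_join (sle_refl _ _) IH.
Qed.

(** D(d) = 1 for a rational d > 0: by the Archimedean property
    1 = (1 - m d) + m d with 1 - m d <= 0, so 1 = D(1) <= D(m d) <= D(d). *)
Lemma spec_D_rat_pos (d : rat) : 0 < d -> spec_le R Stop (SD (rq R d)).
Proof.
move=> d_pos; set m := Num.Def.archi_bound d^-1.
have m_big : 1 < m.+1%:R * d.
  rewrite -[X in X < _](mulVf (lt0r_neq0 d_pos)) ltr_pM2r //.
  apply: lt_trans (archi_boundP _) _; last by rewrite ltr_nat.
  by rewrite invr_ge0 ltW.
have split_unit : runit R = rq R (1 - m.+1%:R * d) + rq R d *+ m.+1.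
  by rewrite /rq -scaler_nat scalerA -scalerDl subrK scale1r.
apply: sle_trans (sle_D1 R) _; rewrite [X in SD X]split_unit.
apply: sle_trans (sle_Dadd R _ _) _; apply: sle_join; last exact: spec_D_natmul.
by apply: sle_trans (sle_bot _ _); apply: spec_D_rat_nonpos; lra.
Qed.

(** For u < v the opens D(v - f) and D(f - u) cover Spec(R), since their
    arguments add up to the positive rational v - u. *)
Lemma spec_cover (f : V) (u v : rat) :
  u < v -> spec_le R Stop (Sjoin (SD (rq R v - f)) (SD (f - rq R u))).
Proof.
move=> huv; have width_pos : 0 < v - u by lra.
apply: sle_trans (spec_D_rat_pos width_pos) _.
have -> : rq R (v - u) = (rq R v - f) + (f - rq R u).
  by rewrite /rq scalerBl addrA subrK.
exact: sle_Dadd.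
Qed.

End SpecCover.

(** A valuation gives measure at least 1 to two opens covering Spec(R):
    mu(x) + mu(y) = mu(x \/ y) + mu(x /\ y) >= 1 + 0. *)
Lemma valuation_cover (V : lmodType rat) (R : riesz_space V)
    (mu : spec_term V -> rat -> Prop) (Hmu : valuation R mu) (x y : spec_term V) :
  spec_le R Stop (Sjoin x y) -> lr_le (lr_const 1) (lr_add (mu x) (mu y)).
Proof.
move=> cover q hq.
have join_q : mu (Sjoin x y) q by apply: (val_mono Hmu cover); apply/(val_top Hmu).
have [_ [_ rounded]] := val_lower Hmu (Sjoin x y).
have [p [hqp join_p]] := rounded q join_q.
have meet_neg : mu (Smeet x y) ((q - p) / 2%:R) by apply: (val_nonneg Hmu); lra.
by apply/(val_modular Hmu); exists p, ((q - p) / 2%:R); do 2!split => //; lra.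
Qed.

Section Grid.
Variables (r s : rat) (n : nat).
Hypothesis r_lt_s : r < s.

Definition grid (k : nat) : rat := r + k.+1%:R * ((s - r) / n.+1%:R).

Let step_pos : 0 < (s - r) / n.+1%:R.
Proof. by rewrite divr_gt0 ?subr_gt0 ?ltr0n. Qed.

Lemma grid_gt_start (k : nat) : r < grid k.
Proof. by rewrite /grid ltrDl mulr_gt0 ?ltr0n. Qed.

Lemma grid_increasing (j k : nat) : (j < k)%N -> grid j < grid k.
Proof. by move=> jk; rewrite /grid ltrD2l ltr_pM2r // ltr_nat. Qed.

Lemma grid_end : grid n = s.
Proof. by rewrite /grid mulrC divfK ?pnatr_eq0 // addrC subrK. Qed.

End Grid.

Theorem theorem4p12 (V : lmodType rat) (R : riesz_space V)
    (mu : spec_term V -> rat -> Prop) (Hmu : valuation R mu)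
    (f : V) (hf : rle R 0 f) (N : nat) (hN : (1 <= N)%N) (r s : rat) (hrs : r < s) :
  exists r' s' : rat, r < r' /\ r' < s' /\ s' < s /\
    Delta_lt R mu f r' s' (1 / N%:R).
Proof.
(* Grid t_0 < ... < t_(2N+2) = s; band i is [t_(2i), t_(2i+1)]. *)
pose t := grid r s N.*2.+2.
have t_inc j k : (j < k)%N -> t j < t k by exact: grid_increasing.
pose A i := mu (SD (rq R (t i.*2) - f)).
pose B i := mu (SD (f - rq R (t i.*2.+1))).
have c_big : 1 < N.+1%:R * (1 / N%:R) :> rat.
  have -> : N.+1%:R * (1 / N%:R) = 1 + N%:R^-1 :> rat.
    by rewrite -natr1; field; rewrite pnatr_eq0 -lt0n.
  by rewrite ltrDl invr_gt0 ltr0n.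
have nonneg a q : q < 0 -> mu (SD a) q by move=> q_neg; apply: (val_nonneg Hmu).
(* D(t_(2i+2) - f) and D(f - t_(2i+1)) cover Spec(R), so A_(i+1) + B_i >= 1. *)
have gap i : (i < N)%N -> lr_le (lr_const 1) (lr_add (A i.+1) (B i)).
  by move=> _; apply: (valuation_cover Hmu); rewrite doubleS; apply/spec_cover/t_inc.
have [i [i_le [a [b [ha [hb hab]]]]]] :=
  lower_real_pigeonhole c_big (nonneg _) (nonneg _) gap.
exists (t i.*2), (t i.*2.+1); do ![split].
- exact: grid_gt_start.
- exact: t_inc.
- by rewrite -(grid_end r s N.*2.+2) -/t; apply: t_inc; rewrite !ltnS leq_double.
- by exists a, b.
Qed.
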